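(* Let $b>0$, $\Delta>0$, $\sigma_\theta^2>0$ be real numbers and define $$E_1(a)=\begin{cases}\dfrac{b-\sqrt{\tfrac{b^2-\Delta a+\sqrt{(b^2-\Delta a)^2+\sigma_\theta^2a^2}}{2}}}{a}, & a\neq0,\\[1ex] \dfrac{\Delta}{2b}, & a=0,\end{cases}$$ and $\bar a=\frac{4b^2\Delta}{\sigma_\theta^2}$. Then $E_1(a)>0$ if and only if $a<\bar a$, and on the region $a<\bar a$ the function $E_1$ has a unique maximizer $a^\dagger$. Moreover, $a^\dagger>0$ iff $\sigma_\theta^2<\Delta^2$, $a^\dagger=0$ iff $\sigma_\theta^2=\Delta^2$, and $a^\dagger<0$ iff $\sigma_\theta^2>\Delta^2$. Finally, $a^\dagger<\frac{2b^2\Delta}{\Delta^2+\sigma_\theta^2}<\bar a$.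
   Context: $E_1(a)$ is the expected effort in the affine symmetric Bayesian equilibrium of the cubic contest, where $\Delta=c-E[\theta]$ and $\sigma_\theta^2$ is the type variance. *)

From Stdlib Require Import Reals Lra.
Open Scope R_scope.

Definition E1_eff (b Dl s2 a : R) : R :=
  if Req_EM_T a 0 then Dl / (2 * b)
  else (b - sqrt ((b ^ 2 - Dl * a + sqrt ((b ^ 2 - Dl * a) ^ 2 + s2 * a ^ 2)) / 2)) / a.

Definition abar_thr (b Dl s2 : R) : R := 4 * b ^ 2 * Dl / s2.

From Stdlib Require Import Reals Lra Psatz.
Open Scope R_scope.

(** Write x = b^2 - Δa and Q(a) for the outer radical of E_1, so that a E_1(a) = b - Q(a)
    and Q(a)^2 is the larger root of P_a(y) = y^2 - x y - σ^2 a^2/4; for y > 0 the sign of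
    P_a(y) tells on which side of Q(a)^2 the number y lies.  Taking y = b^2 gives
    E_1(a) (b + Q(a)) (Q(a)^2 + Δa) = Δb^2 - σ^2 a/4, whence the sign of E_1.

    For the maximum, E_1(a) >= e forces b - e a > 0 and a P_a((b - e a)^2) >= 0.  Choose u
    (which will be e a† = b - Q(a†)) by the intermediate value theorem so that
    σ^2 c^2 = Δ^2 (b - u)^3 (b + u) with c = b^2 + b u - u^2, and set e = Δ(b + u)/(2c).
    Then P_a((b - e a)^2) = a e^3 (a - a†)^2 (e a - 2b^2/(b + u)) with a† = 2cu/(Δ(b + u)),
    and the last factor is negative as soon as b - e a > 0: so E_1(a) >= e only at a = a†,
    where E_1(a†) = e.  Both a† and Δ^2 - σ^2 are positive multiples of u. *)

Lemma pow2_nonpos_eq0 (x : R) : x ^ 2 <= 0 -> x = 0.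
Proof.
  intros h; apply Rsqr_0_uniq; unfold Rsqr.
  pose proof (pow2_ge_0 x); replace (x * x) with (x ^ 2) by ring; lra.
Qed.

Lemma quad_factor (x k q y : R) : q * (q - x) = k ->
  y ^ 2 - x * y - k = (y - q) * (y + q - x).
Proof. intros <-; ring. Qed.

Lemma le_root_iff (x k q y : R) : q * (q - x) = k -> x <= q -> 0 < y ->
  (y <= q <-> y ^ 2 - x * y - k <= 0).
Proof.
  intros hk hxq hy; rewrite (quad_factor x k q y hk).
  assert (0 < y + q - x) by lra.
  split; intros h; nra.
Qed.

Lemma lt_root_iff (x k q y : R) : q * (q - x) = k -> x <= q -> 0 < y ->
  (y < q <-> y ^ 2 - x * y - k < 0).
Proof.
  intros hk hxq hy; rewrite (quad_factor x k q y hk).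
  assert (0 < y + q - x) by lra.
  split; intros h; nra.
Qed.

Section Effort.

Variables b Dl s : R.
Hypotheses (hb : 0 < b) (hD : 0 < Dl) (hs : 0 < s).

Definition Qsq (a : R) : R :=
  (b ^ 2 - Dl * a + sqrt ((b ^ 2 - Dl * a) ^ 2 + s * a ^ 2)) / 2.

Definition Q (a : R) : R := sqrt (Qsq a).

Definition Qpoly (a y : R) : R := y ^ 2 - (b ^ 2 - Dl * a) * y - s * a ^ 2 / 4.

Lemma Qsq_root (a : R) : Qsq a * (Qsq a - (b ^ 2 - Dl * a)) = s * a ^ 2 / 4.
Proof.
  unfold Qsq; set (x := b ^ 2 - Dl * a).
  assert (hS : sqrt (x ^ 2 + s * a ^ 2) * sqrt (x ^ 2 + s * a ^ 2) = x ^ 2 + s * a ^ 2)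
    by (apply sqrt_sqrt; nra).
  nra.
Qed.

Lemma Qsq_ge (a : R) : b ^ 2 - Dl * a <= Qsq a.
Proof.
  unfold Qsq; set (x := b ^ 2 - Dl * a).
  assert (hS : sqrt (x ^ 2 + s * a ^ 2) * sqrt (x ^ 2 + s * a ^ 2) = x ^ 2 + s * a ^ 2)
    by (apply sqrt_sqrt; nra).
  pose proof (sqrt_pos (x ^ 2 + s * a ^ 2)).
  nra.
Qed.

Lemma Qsq_pos (a : R) : 0 < Qsq a.
Proof.
  pose proof (Qsq_root a) as hroot; pose proof (Qsq_ge a) as hge.
  destruct (Req_dec a 0) as [-> | ha].
  - nra.
  - pose proof (Rsqr_pos_lt a ha); unfold Rsqr in *.
    nra.
Qed.

Lemma Qsq_0 : Qsq 0 = b ^ 2.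
Proof.
  unfold Qsq.
  replace ((b ^ 2 - Dl * 0) ^ 2 + s * 0 ^ 2) with ((b ^ 2) ^ 2) by ring.
  rewrite sqrt_pow2 by nra.
  field.
Qed.

Lemma Q_pos (a : R) : 0 < Q a.
Proof. apply sqrt_lt_R0, Qsq_pos. Qed.

Lemma Q_sq (a : R) : Q a ^ 2 = Qsq a.
Proof. apply pow2_sqrt, Rlt_le, Qsq_pos. Qed.

Lemma Q_0 : Q 0 = b.
Proof. unfold Q; rewrite Qsq_0; apply sqrt_pow2; lra. Qed.

Lemma le_Qsq_iff (a y : R) : 0 < y -> (y <= Qsq a <-> Qpoly a y <= 0).
Proof. apply le_root_iff; [apply Qsq_root | apply Qsq_ge]. Qed.

Lemma lt_Qsq_iff (a y : R) : 0 < y -> (y < Qsq a <-> Qpoly a y < 0).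
Proof. apply lt_root_iff; [apply Qsq_root | apply Qsq_ge]. Qed.

Lemma E1_eff_0 : E1_eff b Dl s 0 = Dl / (2 * b).
Proof. unfold E1_eff; destruct (Req_EM_T 0 0); [reflexivity | contradiction]. Qed.

Lemma E1_eff_neq0 (a : R) : a <> 0 -> E1_eff b Dl s a = (b - Q a) / a.
Proof. intros ha; unfold E1_eff; destruct (Req_EM_T a 0); [contradiction | reflexivity]. Qed.

Lemma mul_E1_eff (a : R) : a * E1_eff b Dl s a = b - Q a.
Proof.
  destruct (Req_dec a 0) as [-> | ha].
  - rewrite Q_0; ring.
  - rewrite E1_eff_neq0 by exact ha; field; exact ha.
Qed.

Lemma E1_eff_factor (a : R) :
  E1_eff b Dl s a * ((b + Q a) * (Qsq a + Dl * a)) = Dl * b ^ 2 - s * a / 4.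
Proof.
  destruct (Req_dec a 0) as [-> | ha].
  - rewrite E1_eff_0, Q_0, Qsq_0; field; lra.
  - apply (Rmult_eq_reg_l a); [| exact ha].
    replace (a * (E1_eff b Dl s a * ((b + Q a) * (Qsq a + Dl * a))))
      with (a * E1_eff b Dl s a * (b + Q a) * (Qsq a + Dl * a)) by ring.
    rewrite mul_E1_eff.
    replace ((b - Q a) * (b + Q a)) with (b ^ 2 - Qsq a) by (rewrite <- Q_sq; ring).
    pose proof (Qsq_root a).
    nra.
Qed.

Lemma E1_eff_pos_iff (a : R) : 0 < E1_eff b Dl s a <-> a < abar_thr b Dl s.
Proof.
  pose proof (E1_eff_factor a) as hfac.
  assert (hW : 0 < (b + Q a) * (Qsq a + Dl * a)).
  { pose proof (Q_pos a); pose proof (Qsq_ge a). apply Rmult_lt_0_compat; nra. }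
  assert (habar : abar_thr b Dl s * s = 4 * b ^ 2 * Dl) by (unfold abar_thr; field; lra).
  split; intros h; nra.
Qed.

Lemma bound_lt_abar : 2 * b ^ 2 * Dl / (Dl ^ 2 + s) < abar_thr b Dl s.
Proof.
  unfold abar_thr; apply Rlt_0_minus.
  assert (0 < b ^ 2) by (apply pow_lt; lra).
  replace (4 * b ^ 2 * Dl / s - 2 * b ^ 2 * Dl / (Dl ^ 2 + s))
    with (2 * b ^ 2 * Dl * (2 * Dl ^ 2 + s) / (s * (Dl ^ 2 + s))) by (field; nra).
  apply Rdiv_lt_0_compat; apply Rmult_lt_0_compat; nra.
Qed.

Lemma E1_eff_ge_level (a t : R) : a <> 0 -> 0 < t -> t <= E1_eff b Dl s a ->
  0 < b - t * a /\ 0 <= a * Qpoly a ((b - t * a) ^ 2).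
Proof.
  intros ha ht hle.
  pose proof (mul_E1_eff a) as hE; pose proof (Q_pos a) as hQ; pose proof (Q_sq a) as hQ2.
  assert (hpos_lev : 0 < b - t * a) by nra.
  assert (hy : 0 < (b - t * a) ^ 2) by (apply pow_lt; exact hpos_lev).
  split; [exact hpos_lev |].
  destruct (Rlt_or_le 0 a) as [hpos | hneg].
  - assert (hlev : Q a <= b - t * a) by nra.
    assert (hP : ~ Qpoly a ((b - t * a) ^ 2) < 0).
    { rewrite <- lt_Qsq_iff, <- hQ2 by exact hy. apply Rle_not_lt, pow_incr; lra. }
    apply Rnot_lt_le in hP.
    nra.
  - assert (hlev : b - t * a <= Q a) by nra.
    assert (hP : Qpoly a ((b - t * a) ^ 2) <= 0).
    { rewrite <- le_Qsq_iff, <- hQ2 by exact hy. apply pow_incr; lra. }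
    nra.
Qed.

Definition peak_c (u : R) : R := b ^ 2 + b * u - u ^ 2.

Lemma peak_param_exists : exists u : R,
  0 < b + u /\ u < b /\ 0 < peak_c u /\ s * peak_c u ^ 2 = Dl ^ 2 * (b - u) ^ 3 * (b + u).
Proof.
  set (f u := s * peak_c u ^ 2 - Dl ^ 2 * (b - u) ^ 3 * (b + u)).
  assert (h5 : sqrt 5 * sqrt 5 = 5) by (apply sqrt_sqrt; lra).
  assert (h5pos : 0 <= sqrt 5) by apply sqrt_pos.
  assert (h5lo : 2 < sqrt 5) by nra.
  assert (h5hi : sqrt 5 < 3) by nra.
  set (u0 := b * (1 - sqrt 5) / 2).
  set (u1 := b * (1 + sqrt 5) / 2).
  assert (hfac : forall u, peak_c u = (u - u0) * (u1 - u))
    by (intro u; unfold peak_c, u0, u1; nra).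
  assert (hf0 : f u0 < 0).
  { unfold f; rewrite hfac; replace (u0 - u0) with 0 by ring.
    assert (0 < Dl ^ 2) by (apply pow_lt; lra).
    assert (0 < (b - u0) ^ 3) by (apply pow_lt; unfold u0; nra).
    assert (0 < b + u0) by (unfold u0; nra).
    assert (0 < Dl ^ 2 * (b - u0) ^ 3) by (apply Rmult_lt_0_compat; lra).
    nra. }
  assert (hfb : 0 < f b).
  { unfold f, peak_c; replace (b - b) with 0 by ring.
    assert (0 < b ^ 2) by (apply pow_lt; lra).
    assert (0 < (b ^ 2 + b * b - b ^ 2) ^ 2) by (apply pow_lt; nra).
    nra. }
  assert (hcont : continuity f) by (unfold f, peak_c; reg).
  assert (hu0b : u0 < b) by (unfold u0; nra).
  destruct (IVT f u0 b hcont hu0b hf0 hfb) as [u [[hlo hhi] hfu]].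
  assert (hu0 : u0 < u) by (destruct hlo as [? | <-]; [assumption | lra]).
  assert (hub : u < b) by (destruct hhi as [? | ->]; [assumption | lra]).
  exists u; split; [unfold u0 in hu0; nra |].
  split; [exact hub |].
  split; [rewrite hfac; apply Rmult_lt_0_compat; unfold u1; nra | unfold f in hfu; lra].
Qed.

Section Peak.

Variable u : R.
Hypotheses (hbu : 0 < b + u) (hub : u < b) (hc : 0 < peak_c u)
  (htan : s * peak_c u ^ 2 = Dl ^ 2 * (b - u) ^ 3 * (b + u)).

Definition peak_value : R := Dl * (b + u) / (2 * peak_c u).
Definition peak_arg : R := 2 * peak_c u * u / (Dl * (b + u)).

Lemma s_tangency : s = Dl ^ 2 * (b - u) ^ 3 * (b + u) / peak_c u ^ 2.
Proof. rewrite <- htan; field; lra. Qed.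

Lemma peak_quartic (a : R) :
  Qpoly a ((b - peak_value * a) ^ 2)
  = a * peak_value ^ 3 * (a - peak_arg) ^ 2 * (peak_value * a - 2 * b ^ 2 / (b + u)).
Proof.
  unfold Qpoly; rewrite s_tangency.
  unfold peak_value, peak_arg, peak_c in *; field; lra.
Qed.

Lemma peak_value_pos : 0 < peak_value.
Proof. unfold peak_value; apply Rdiv_lt_0_compat; nra. Qed.

Lemma peak_value_mul_arg : peak_value * peak_arg = u.
Proof. unfold peak_value, peak_arg; field; lra. Qed.

Lemma E1_eff_peak_arg : E1_eff b Dl s peak_arg = peak_value.
Proof.
  destruct (Req_dec u 0) as [hu0 | hu0].
  - assert (hal : peak_arg = 0) by (unfold peak_arg; rewrite hu0; field; lra).
    rewrite hal, E1_eff_0; unfold peak_value, peak_c; rewrite hu0; field; lra.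
  - assert (hal : peak_arg <> 0).
    { intros h; apply hu0; rewrite <- peak_value_mul_arg, h; ring. }
    pose proof (peak_quartic peak_arg) as hq.
    rewrite peak_value_mul_arg in hq.
    replace (peak_arg - peak_arg) with 0 in hq by ring.
    assert (hy : 0 < (b - u) ^ 2) by (apply pow_lt; lra).
    assert (hQsq : (b - u) ^ 2 = Qsq peak_arg).
    { apply Rle_antisym.
      - rewrite le_Qsq_iff, hq by exact hy; lra.
      - apply Rnot_lt_le; rewrite lt_Qsq_iff, hq by exact hy; lra. }
    assert (hQ : Q peak_arg = b - u) by (unfold Q; rewrite <- hQsq; apply sqrt_pow2; lra).
    apply (Rmult_eq_reg_l peak_arg); [| exact hal].
    rewrite mul_E1_eff, hQ, Rmult_comm, peak_value_mul_arg; ring.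
Qed.

Lemma E1_eff_ge_peak (a : R) : peak_value <= E1_eff b Dl s a -> a = peak_arg.
Proof.
  intros hge.
  pose proof peak_value_pos as he.
  destruct (Req_dec a 0) as [-> | ha].
  - rewrite E1_eff_0 in hge; unfold peak_value in hge.
    assert (hcross : Dl * (b + u) * b <= Dl * peak_c u).
    { apply (Rmult_le_reg_r (/ (2 * b * peak_c u))); [apply Rinv_0_lt_compat; nra |].
      replace (Dl * (b + u) * b * / (2 * b * peak_c u)) with (Dl * (b + u) / (2 * peak_c u))
        by (field; lra).
      replace (Dl * peak_c u * / (2 * b * peak_c u)) with (Dl / (2 * b)) by (field; lra).
      exact hge. }
    assert (hu2 : u ^ 2 <= 0) by (unfold peak_c in hcross; nra).
    assert (hu0 : u = 0) by (apply pow2_nonpos_eq0, hu2).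
    unfold peak_arg; rewrite hu0; field; lra.
  - destruct (E1_eff_ge_level a peak_value ha he hge) as [hlev hsgn].
    rewrite peak_quartic in hsgn.
    assert (hfar : peak_value * a < 2 * b ^ 2 / (b + u)).
    { apply (Rlt_le_trans _ b); [lra |].
      apply (Rmult_le_reg_r (b + u)); [exact hbu |].
      unfold Rdiv; rewrite Rmult_assoc, Rinv_l by lra; nra. }
    assert (hK : 0 < a ^ 2 * peak_value ^ 3 * (2 * b ^ 2 / (b + u) - peak_value * a)).
    { apply Rmult_lt_0_compat; [apply Rmult_lt_0_compat |]; [| apply pow_lt |]; try lra.
      pose proof (Rsqr_pos_lt a ha); unfold Rsqr in *; nra. }
    assert (hsq : (a - peak_arg) ^ 2 <= 0).
    { replace (a * (a * peak_value ^ 3 * (a - peak_arg) ^ 2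
                     * (peak_value * a - 2 * b ^ 2 / (b + u))))
        with (- (a ^ 2 * peak_value ^ 3 * (2 * b ^ 2 / (b + u) - peak_value * a))
              * (a - peak_arg) ^ 2) in hsgn by ring.
      nra. }
    apply Rminus_diag_uniq, pow2_nonpos_eq0, hsq.
Qed.

Lemma E1_eff_le_peak (a : R) : E1_eff b Dl s a <= peak_value.
Proof.
  apply Rnot_lt_le; intros hlt.
  assert (a = peak_arg) as -> by (apply E1_eff_ge_peak; lra).
  rewrite E1_eff_peak_arg in hlt; lra.
Qed.

Lemma peak_sign_cases :
  (0 < peak_arg /\ s < Dl ^ 2) \/ (peak_arg = 0 /\ s = Dl ^ 2) \/ (peak_arg < 0 /\ Dl ^ 2 < s).
Proof.
  set (g := 2 * (b - u) * peak_c u + b ^ 2 * (2 * b - u)).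
  assert (hg : 0 < g) by (unfold g; nra).
  assert (hgap : Dl ^ 2 - s = u * (Dl ^ 2 * g / peak_c u ^ 2)).
  { rewrite s_tangency; unfold g, peak_c in *; field; lra. }
  assert (hal : peak_arg = u * (2 * peak_c u / (Dl * (b + u)))) by (unfold peak_arg; field; lra).
  assert (hk1 : 0 < Dl ^ 2 * g / peak_c u ^ 2).
  { apply Rdiv_lt_0_compat; [apply Rmult_lt_0_compat; [apply pow_lt |] | apply pow_lt]; lra. }
  assert (hk2 : 0 < 2 * peak_c u / (Dl * (b + u))) by (apply Rdiv_lt_0_compat; nra).
  destruct (Rtotal_order u 0) as [hu | [hu | hu]].
  - right; right; split; nra.
  - right; left; rewrite hu, Rmult_0_l in hal, hgap; split; lra.
  - left; split; nra.
Qed.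

Lemma peak_arg_lt_bound : peak_arg < 2 * b ^ 2 * Dl / (Dl ^ 2 + s).
Proof.
  assert (hden : 0 < 2 * b ^ 2 - u ^ 2) by nra.
  replace (2 * b ^ 2 * Dl / (Dl ^ 2 + s)) with (2 * peak_c u ^ 2 / (Dl * (2 * b ^ 2 - u ^ 2))).
  2: { assert (0 < Dl ^ 2 * (b - u) ^ 3 * (b + u))
         by (repeat apply Rmult_lt_0_compat; try apply pow_lt; lra).
       pose proof (pow2_ge_0 (Dl * peak_c u)).
       rewrite s_tangency; unfold peak_c in *; field; repeat split; nra. }
  apply Rlt_0_minus.
  replace (2 * peak_c u ^ 2 / (Dl * (2 * b ^ 2 - u ^ 2)) - peak_arg)
    with (2 * peak_c u * b ^ 3 / (Dl * (b + u) * (2 * b ^ 2 - u ^ 2)))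
    by (unfold peak_arg, peak_c in *; field; nra).
  apply Rdiv_lt_0_compat; [| apply Rmult_lt_0_compat; nra].
  assert (0 < b ^ 3) by (apply pow_lt; lra). nra.
Qed.

End Peak.

End Effort.

Theorem theorem6 (b Dl s2 : R) (hb : 0 < b) (hD : 0 < Dl) (hs : 0 < s2) :
  (forall a : R, 0 < E1_eff b Dl s2 a <-> a < abar_thr b Dl s2) /\
  exists adag : R,
    adag < abar_thr b Dl s2 /\
    (forall a : R, a < abar_thr b Dl s2 -> E1_eff b Dl s2 a <= E1_eff b Dl s2 adag) /\
    (forall a : R, a < abar_thr b Dl s2 ->
       (forall a' : R, a' < abar_thr b Dl s2 -> E1_eff b Dl s2 a' <= E1_eff b Dl s2 a) -> a = adag) /\
    (0 < adag <-> s2 < Dl ^ 2) /\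
    (adag = 0 <-> s2 = Dl ^ 2) /\
    (adag < 0 <-> s2 > Dl ^ 2) /\
    adag < 2 * b ^ 2 * Dl / (Dl ^ 2 + s2) /\
    2 * b ^ 2 * Dl / (Dl ^ 2 + s2) < abar_thr b Dl s2.
Proof.
  split; [intros a; apply E1_eff_pos_iff; assumption |].
  destruct (peak_param_exists b Dl s2 hb hD hs) as (u & hbu & hub & hc & htan).
  pose proof (bound_lt_abar b Dl s2 hb hD hs) as hbar.
  pose proof (peak_arg_lt_bound b Dl s2 hb hD u hbu hub hc htan) as hbound.
  pose proof (E1_eff_peak_arg b Dl s2 hb hD hs u hbu hub hc htan) as hpeak.
  exists (peak_arg b Dl u).
  split; [lra |].
  split.
  { intros a _; rewrite hpeak; exact (E1_eff_le_peak b Dl s2 hb hD hs u hbu hub hc htan a). }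
  split.
  { intros a _ hmax; apply (E1_eff_ge_peak b Dl s2 hb hD hs u hbu hub hc htan).
    rewrite <- hpeak; apply hmax; lra. }
  destruct (peak_sign_cases b Dl s2 hD u hbu hub hc htan) as [h | [h | h]];
    repeat split; intros; lra.
Qed.
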